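(* Let $G_1,G_2$ be $q$-cut-dense graphs. Then $G_1\cup G_2$ is $\frac{q|V(G_1)\cap V(G_2)|}{4|V(G_1)\cup V(G_2)|}$-cut-dense.
   Context: A graph $G$ is $q$-cut-dense if for every partition $V(G)=A\cup B$ into disjoint sets, $e_G(A,B)\ge q|A||B|$, where $e_G(A,B)$ counts edges with one endpoint in $A$ and one in $B$. $G_1\cup G_2$ is the graph with vertex set $V(G_1)\cup V(G_2)$ and edge set $E(G_1)\cup E(G_2)$. *)

From mathcomp Require Import all_boot all_order all_algebra.
Set Implicit Arguments. Unset Strict Implicit. Unset Printing Implicit Defensive.
Import Order.TTheory GRing.Theory Num.Theory.

(* Using a common ambient type lets us speak of V(G1) ∩ V(G2), G1 ∪ G2. *)
Record sgraph (T : finType) := SGraph { gV : {set T}; gE : {set {set T}} }.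

Definition is_simple_graph (T : finType) (G : sgraph T) : Prop :=
  forall e, e \in gE G -> e \subset gV G /\ #|e| = 2.

Definition graph_union (T : finType) (G1 G2 : sgraph T) : sgraph T :=
  SGraph (gV G1 :|: gV G2) (gE G1 :|: gE G2).

Definition e_between (T : finType) (G : sgraph T) (A B : {set T}) : nat :=
  #|[set e in gE G | (e :&: A != set0) && (e :&: B != set0)]|.

Definition cut_dense (R : realFieldType) (q : R) (T : finType) (G : sgraph T) : Prop :=
  forall A B : {set T}, A :&: B = set0 -> A :|: B = gV G ->
    (q * (#|A|%:R) * (#|B|%:R) <= (e_between G A B)%:R)%R.

From mathcomp Require Import all_boot all_order all_algebra.
From mathcomp Require Import zify lra.
Import Order.TTheory GRing.Theory Num.Theory.
Set Implicit Arguments. Unset Strict Implicit. Unset Printing Implicit Defensive.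
Local Open Scope ring_scope.

(* Restricting a cut (A, B) of G1 ∪ G2 to V(Gi) gives a cut of Gi, so
   2 e(A, B) >= q (|A ∩ V1| |B ∩ V1| + |A ∩ V2| |B ∩ V2|).  The common part
   I = V1 ∩ V2 is split between A and B, say |A ∩ I| >= |I| / 2; as A ∩ I lies
   in both V1 and V2 and B is covered by V1 ∪ V2, this gives
   |I| |B| / 2 <= |A ∩ V1| |B ∩ V1| + |A ∩ V2| |B ∩ V2|, and |A| <= |V1 ∪ V2|
   turns it into |I| |A| |B| <= 4 |V1 ∪ V2| e(A, B) / q. *)

Lemma leq_e_between (T : finType) (G H : sgraph T) (A B A' B' : {set T}) :
  gE G \subset gE H -> A \subset A' -> B \subset B' ->
  (e_between G A B <= e_between H A' B')%N.
Proof.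
move=> sGH sAA' sBB'; apply/subset_leq_card/subsetP => e.
have meetS (X X' : {set T}) : X \subset X' -> e :&: X != set0 -> e :&: X' != set0.
  by move=> sXX'; apply: contra => /eqP eX'; rewrite -subset0 -eX' setIS.
rewrite !inE => /and3P[eG eA eB].
by rewrite (subsetP sGH _ eG) (meetS A) // (meetS B).
Qed.

Lemma subgraph_cut_lower_bound (R : realFieldType) (q : R) (T : finType)
    (G H : sgraph T) (A B : {set T}) :
  cut_dense q G -> gE G \subset gE H -> gV G \subset gV H ->
  A :&: B = set0 -> A :|: B = gV H ->
  q * #|A :&: gV G|%:R * #|B :&: gV G|%:R <= (e_between H A B)%:R.
Proof.
move=> cdG sE sV AB0 ABH.
apply: le_trans (cdG _ _ _ _) _.
- by rewrite setIACA setIid AB0 set0I.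
- by rewrite -setIUl ABH; apply/setIidPr.
by rewrite ler_nat leq_e_between // subsetIl.
Qed.

Lemma leq_meet_mul_cover (T : finType) (V1 V2 X Y : {set T}) :
  Y \subset V1 :|: V2 ->
  (#|X :&: (V1 :&: V2)| * #|Y|
     <= #|X :&: V1| * #|Y :&: V1| + #|X :&: V2| * #|Y :&: V2|)%N.
Proof.
move=> sY.
have cover_Y : (#|Y| <= #|Y :&: V1| + #|Y :&: V2|)%N.
  by rewrite -{1}(setIidPl sY) setIUr leq_card_setU.
have meet_le (V : {set T}) :
    V1 :&: V2 \subset V -> (#|X :&: (V1 :&: V2)| <= #|X :&: V|)%N.
  by move=> sV; rewrite subset_leq_card // setIS.
apply: leq_trans (leq_mul (leqnn _) cover_Y) _.
by rewrite mulnDr leq_add // leq_mul // meet_le // (subsetIl, subsetIr).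
Qed.

Lemma leq_union_cut_count (T : finType) (V1 V2 A B : {set T}) :
  A :|: B = V1 :|: V2 ->
  (#|V1 :&: V2| * #|A| * #|B| <= #|V1 :|: V2| * 2 *
     (#|A :&: V1| * #|B :&: V1| + #|A :&: V2| * #|B :&: V2|))%N.
Proof.
set I := V1 :&: V2.
wlog le_BI_AI : A B / (#|B :&: I| <= #|A :&: I|)%N.
  move=> sym ABV; have [/sym-> // | /ltnW le_AI_BI] := leqP #|B :&: I| #|A :&: I|.
  rewrite mulnAC (mulnC #|A :&: V1|) (mulnC #|A :&: V2|).
  by apply: sym; rewrite // setUC.
move=> ABV.
have split_I : (#|I| <= 2 * #|A :&: I|)%N.
  have sI : I \subset A :|: B by rewrite ABV subIset // subsetUl.
  by rewrite -{1}(setIidPr sI) setIUl (leq_trans (leq_card_setU _ _)) //; lia.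
have le_A_V : (#|A| <= #|V1 :|: V2|)%N by rewrite -ABV subset_leq_card // subsetUl.
have cover : (#|A :&: I| * #|B|
    <= #|A :&: V1| * #|B :&: V1| + #|A :&: V2| * #|B :&: V2|)%N.
  by rewrite leq_meet_mul_cover // -ABV subsetUr.
have := leq_mul (leq_mul split_I (leqnn #|A|)) (leqnn #|B|).
have := leq_mul le_A_V (leq_mul (leqnn 2) cover).
nia.
Qed.

Theorem lemma3p8 (R : realFieldType) (q : R) (T : finType) (G1 G2 : sgraph T) :
  is_simple_graph G1 -> is_simple_graph G2 ->
  cut_dense q G1 -> cut_dense q G2 ->
  cut_dense (q * (#|gV G1 :&: gV G2|%:R) / (4 * (#|gV G1 :|: gV G2|%:R)))
            (graph_union G1 G2).
Proof.
move=> _ _ cd1 cd2 A B AB0 ABV.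
pose H := graph_union G1 G2.
have e1 := subgraph_cut_lower_bound (H := H) cd1 (subsetUl _ _) (subsetUl _ _) AB0 ABV.
have e2 := subgraph_cut_lower_bound (H := H) cd2 (subsetUr _ _) (subsetUr _ _) AB0 ABV.
have count := leq_union_cut_count ABV.
rewrite -(ler_nat R) !natrM natrD !natrM in count.
have [q_le0 | q_gt0] := leP q 0.
  apply: le_trans (ler0n _ _).
  by rewrite -!mulrA mulr_le0_ge0 // !mulr_ge0 // invr_ge0 mulr_ge0.
have [-> | n_gt0] := posnP #|gV G1 :|: gV G2|.
  by rewrite mulr0 invr0 !mulr0 !mul0r.
have n_gt0R : 0 < #|gV G1 :|: gV G2|%:R :> R by rewrite ltr0n.
rewrite -mulrA mulrAC ler_pdivrMr ?mulr_gt0 //.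
have := ler_wpM2l (ltW q_gt0) count.
have := ler_wpM2l (ltW n_gt0R) (lerD e1 e2).
nra.
Qed.
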